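(* Let $a,b,c$ be symbols of rank $0$, $1$ and $2$, respectively. There is a family of trees $(t_n)_{n\ge1}$ with all labels in $\{a,b,c\}$ and a constant $C>0$ such that: $|t_n|\in\Theta(n)$; for every $n$ and every subtree $s$ of $t_n$ (rooted at any node), the depth of $s$ is at most $C\log_2(|s|+1)$; and the minimal dag of $t_n$ has $\Omega\big(\frac{n\log\log n}{\log n}\big)$ nodes.
   Context: Trees are finite rooted ordered trees whose nodes are labelled by ranked symbols, a node labelled by a symbol of rank $k$ having exactly $k$ ordered children; $|t|$ is the number of nodes and the depth is the maximal number of edges on a root-to-leaf path. The minimal dag of a tree has one node for each isomorphism class (as labelled ordered trees) of subtrees; its size is its number of nodes. *)

From Stdlib Require Import Reals List.
Import ListNotations.

Inductive tree : Type :=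
| Ta : tree
| Tb : tree -> tree
| Tc : tree -> tree -> tree.

Definition tree_eq_dec (s t : tree) : {s = t} + {s <> t}.
Proof. decide equality. Defined.

Fixpoint size (t : tree) : nat :=
  match t with
  | Ta => 1
  | Tb u => S (size u)
  | Tc u v => S (size u + size v)
  end.

Fixpoint depth (t : tree) : nat :=
  match t with
  | Ta => 0
  | Tb u => S (depth u)
  | Tc u v => S (Nat.max (depth u) (depth v))
  end.

Fixpoint subtrees (t : tree) : list tree :=
  match t with
  | Ta => [Ta]
  | Tb u => Tb u :: subtrees u
  | Tc u v => Tc u v :: (subtrees u ++ subtrees v)
  end.

(* size of the minimal dag = number of isomorphism classes of subtrees;
   isomorphism of labelled ordered trees is equality in [tree]. *)
Definition dag_size (t : tree) : nat :=
  length (nodup tree_eq_dec (subtrees t)).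

Definition log2R (x : R) : R := ln x / ln 2.

(* The trees b(b(a)) and c(a,a) both have three nodes and depth two, and
   encode one bit, so a complete binary tree of height k over such leaves
   ([code k i]) encodes a 2^k-bit number i with 2^(k+2) - 1 nodes and depth
   k + 2.  A [block] prefixes it with a chain of k unary nodes, whose k + 1
   suffixes are distinct subtrees.  The tree for n is a complete binary tree
   of height h over the blocks of 0, ..., 2^h - 1, where 2^k ~ log n and
   2^h ~ n / log n.  All its subtrees are balanced up to a factor 2, its size
   is Theta(n), and since i < 2^h <= 2^(2^k) is recovered from [code k i],
   it has at least 2^h (k + 1) ~ n log log n / log n distinct subtrees. *)

From Stdlib Require Import Reals List Arith Lia Lra.

Definition bit_tree (i : nat) : tree :=
  if i mod 2 =? 0 then Tc Ta Ta else Tb (Tb Ta).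

Fixpoint code (j i : nat) : tree :=
  match j with
  | 0 => bit_tree i
  | S j' => Tc (code j' i) (code j' (i / 2 ^ 2 ^ j'))
  end.

Fixpoint iter_b (m : nat) (x : tree) : tree :=
  match m with
  | 0 => x
  | S m' => Tb (iter_b m' x)
  end.

Definition block (k i : nat) : tree := iter_b k (code k i).

Fixpoint comb (k h b : nat) : tree :=
  match h with
  | 0 => block k b
  | S h' => Tc (comb k h' b) (comb k h' (b + 2 ^ h'))
  end.

Definition block_size (k : nat) : nat := 2 ^ (k + 2) + k.

Lemma size_code j i : size (code j i) + 1 = 2 ^ (j + 2).
Proof.
  revert i; induction j as [|j IH]; intros i; cbn [code].
  - unfold bit_tree; destruct (i mod 2 =? 0); reflexivity.
  - change (S j + 2) with (S (j + 2)); cbn [size]; rewrite Nat.pow_succ_r'; pose proof (IH i); pose proof (IH (i / 2 ^ 2 ^ j)); lia.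
Qed.

Lemma depth_code j i : depth (code j i) <= j + 2.
Proof.
  revert i; induction j as [|j IH]; intros i; cbn [code].
  - unfold bit_tree; destruct (i mod 2 =? 0); simpl; lia.
  - cbn [depth]; pose proof (IH i); pose proof (IH (i / 2 ^ 2 ^ j)); lia.
Qed.

Lemma size_iter_b m x : size (iter_b m x) = m + size x.
Proof. induction m; simpl; auto. Qed.

Lemma depth_iter_b m x : depth (iter_b m x) = m + depth x.
Proof. induction m; simpl; auto. Qed.

Lemma size_comb k h b : size (comb k h b) + 1 = 2 ^ h * block_size k.
Proof.
  revert b; induction h as [|h IH]; intros b; cbn [comb].
  - unfold block, block_size; rewrite size_iter_b, Nat.mul_1_l; pose proof (size_code k b); lia.
  - cbn [size]; rewrite Nat.pow_succ_r'; pose proof (IH b); pose proof (IH (b + 2 ^ h)); nia.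
Qed.

Lemma depth_comb k h b : depth (comb k h b) <= h + 2 * k + 2.
Proof.
  revert b; induction h as [|h IH]; intros b; cbn [comb].
  - unfold block; rewrite depth_iter_b; pose proof (depth_code k b); lia.
  - cbn [depth]; pose proof (IH b); pose proof (IH (b + 2 ^ h)); lia.
Qed.

Definition log_balanced (s : tree) : Prop := depth s <= 2 * Nat.log2 (size s + 1).

Lemma log_balanced_intro e s :
  depth s <= 2 * e -> 2 ^ e <= size s + 1 -> log_balanced s.
Proof.
  intros Hd He; unfold log_balanced.
  apply Nat.log2_le_pow2 in He; lia.
Qed.

Lemma Forall_subtrees_Tc (P : tree -> Prop) u v :
  P (Tc u v) -> Forall P (subtrees u) -> Forall P (subtrees v) ->
  Forall P (subtrees (Tc u v)).
Proof. intros; constructor; [|apply Forall_app]; auto. Qed.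

Lemma log_balanced_code j i : Forall log_balanced (subtrees (code j i)).
Proof.
  revert i; induction j as [|j IH]; intros i.
  - cbn [code]; unfold bit_tree; destruct (i mod 2 =? 0);
      repeat constructor; unfold log_balanced; simpl; lia.
  - cbn [code]; apply Forall_subtrees_Tc; auto.
    change (Tc _ _) with (code (S j) i).
    apply (log_balanced_intro (S j + 2)).
    + pose proof (depth_code (S j) i); lia.
    + rewrite size_code; reflexivity.
Qed.

Lemma log_balanced_block k i : Forall log_balanced (subtrees (block k i)).
Proof.
  assert (Hm : forall m, m <= k -> Forall log_balanced (subtrees (iter_b m (code k i)))).
  { induction m as [|m IH]; intros Hm; [apply log_balanced_code|].
    constructor; [|apply IH; lia].
    change (Tb _) with (iter_b (S m) (code k i)).
    apply (log_balanced_intro (k + 2)).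
    - rewrite depth_iter_b; pose proof (depth_code k i); lia.
    - rewrite size_iter_b, <- (size_code k i); lia. }
  apply Hm; lia.
Qed.

Lemma log_balanced_comb k h b : Forall log_balanced (subtrees (comb k h b)).
Proof.
  revert b; induction h as [|h IH]; intros b; [apply log_balanced_block|].
  apply Forall_subtrees_Tc; auto.
  change (Tc _ _) with (comb k (S h) b).
  apply (log_balanced_intro (S h + k + 2)).
  - pose proof (depth_comb k (S h) b); lia.
  - rewrite size_comb, <- Nat.add_assoc, (Nat.pow_add_r 2 (S h)).
    unfold block_size; apply Nat.mul_le_mono_l; lia.
Qed.

Lemma In_subtrees_refl t : In t (subtrees t).
Proof. destruct t; simpl; auto. Qed.

Lemma In_subtrees_trans u t s :
  In s (subtrees t) -> In t (subtrees u) -> In s (subtrees u).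
Proof.
  intros Hs; induction u as [| u IH | u1 IH1 u2 IH2]; simpl;
    intros [<- | Ht]; auto.
  rewrite in_app_iff in *; destruct Ht; auto.
Qed.

Lemma dag_size_ge (l : list tree) t :
  NoDup l -> incl l (subtrees t) -> length l <= dag_size t.
Proof.
  intros Hl Hincl; apply NoDup_incl_length; auto.
  intros s Hs; apply nodup_In; auto.
Qed.

Lemma NoDup_list_prod (A B : Type) (l : list A) (l' : list B) :
  NoDup l -> NoDup l' -> NoDup (list_prod l l').
Proof.
  intros Hl Hl'; induction Hl as [| a l Ha Hl IH]; simpl; [constructor|].
  apply NoDup_app; auto.
  - apply NoDup_map_NoDup_ForallPairs; auto.
    intros y y' _ _ E; injection E; auto.
  - intros p Hp Hp'; apply in_map_iff in Hp as (y & <- & _).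
    apply in_prod_iff in Hp' as []; contradiction.
Qed.

Definition not_b (x : tree) : Prop := match x with Tb _ => False | _ => True end.

Lemma iter_b_inj m m' x x' :
  not_b x -> not_b x' -> iter_b m x = iter_b m' x' -> m = m' /\ x = x'.
Proof.
  intros Hx Hx'; revert m'; induction m as [|m IH]; intros [|m'] E; simpl in E.
  - auto.
  - subst x; contradiction.
  - subst x'; contradiction.
  - injection E as E; destruct (IH m' E); auto.
Qed.

Lemma code_eq_mod j i i' : code j i = code j i' -> i mod 2 ^ 2 ^ j = i' mod 2 ^ 2 ^ j.
Proof.
  revert i i'; induction j as [|j IH]; intros i i' E; cbn [code] in E.
  - unfold bit_tree in E; simpl (2 ^ 2 ^ 0).
    pose proof (Nat.mod_upper_bound i 2); pose proof (Nat.mod_upper_bound i' 2).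
    destruct (i mod 2 =? 0) eqn:E1, (i' mod 2 =? 0) eqn:E2;
      try discriminate; rewrite ?Nat.eqb_eq, ?Nat.eqb_neq in *; lia.
  - injection E as E1 E2; apply IH in E1, E2.
    assert (Hsq : 2 ^ 2 ^ S j = 2 ^ 2 ^ j * 2 ^ 2 ^ j)
      by (rewrite <- Nat.pow_add_r; f_equal; simpl; lia).
    rewrite Hsq, !Nat.Div0.mod_mul_r, E1, E2; reflexivity.
Qed.

Lemma block_in_comb k h b i :
  b <= i < b + 2 ^ h -> In (block k i) (subtrees (comb k h b)).
Proof.
  revert b; induction h as [|h IH]; intros b Hi; cbn [comb].
  - replace i with b by (simpl in Hi; lia); apply In_subtrees_refl.
  - rewrite Nat.pow_succ_r' in Hi; cbn [subtrees]; right; apply in_app_iff.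
    destruct (Nat.lt_ge_cases i (b + 2 ^ h)); [left | right]; apply IH; lia.
Qed.

Lemma iter_b_in_subtrees m k x : m <= k -> In (iter_b m x) (subtrees (iter_b k x)).
Proof.
  induction k as [|k IH]; intros Hm.
  - replace m with 0 by lia; apply In_subtrees_refl.
  - destruct (Nat.eq_dec m (S k)) as [-> | Hne]; [apply In_subtrees_refl|].
    simpl; right; apply IH; lia.
Qed.

Lemma dag_size_comb k h :
  1 <= k -> h <= 2 ^ k -> 2 ^ h * (k + 1) <= dag_size (comb k h 0).
Proof.
  intros Hk Hh.
  set (pairs := list_prod (seq 0 (k + 1)) (seq 0 (2 ^ h))).
  set (f := fun p : nat * nat => iter_b (fst p) (code k (snd p))).
  assert (Hlen : length (map f pairs) = 2 ^ h * (k + 1))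
    by (unfold pairs; rewrite length_map, length_prod, !length_seq; lia).
  rewrite <- Hlen; apply dag_size_ge.
  - apply NoDup_map_NoDup_ForallPairs; [|apply NoDup_list_prod; apply seq_NoDup].
    intros [m i] [m' i'] Hp Hp' E; apply in_prod_iff in Hp as [Hm Hi], Hp' as [Hm' Hi'].
    apply in_seq in Hm, Hi, Hm', Hi'; unfold f in E; simpl in E.
    (* for k >= 1 the root of [code k _] is a c-node, so the chain length is determined *)
    destruct k as [|k]; [lia|].
    apply iter_b_inj in E as [-> E]; [|exact I|exact I].
    apply code_eq_mod in E.
    assert (2 ^ h <= 2 ^ 2 ^ S k) by (apply Nat.pow_le_mono_r; lia).
    rewrite !Nat.mod_small in E by lia; subst; reflexivity.
  - intros s Hs; apply in_map_iff in Hs as ([m i] & <- & Hp).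
    apply in_prod_iff in Hp as [Hm Hi]; apply in_seq in Hm, Hi.
    apply (In_subtrees_trans _ (block k i)).
    + apply (iter_b_in_subtrees m k (code k i)); lia.
    + apply block_in_comb; lia.
Qed.

Definition level (n : nat) : nat := Nat.log2_up (Nat.log2 n).

Definition height (n : nat) : nat := Nat.log2 (n / block_size (level n)).

Definition witness (n : nat) : tree := comb (level n) (height n) 0.

Lemma pow2_ge_10_mul l : 6 <= l -> 10 * l <= 2 ^ l.
Proof.
  induction l as [|l IH]; intros Hl; [lia|].
  destruct (Nat.eq_dec l 5) as [-> | Hne]; [simpl; lia|].
  rewrite Nat.pow_succ_r'; specialize (IH ltac:(lia)); lia.
Qed.

Lemma block_size_log2_up_le l : 2 <= l -> block_size (Nat.log2_up l) <= 10 * l.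
Proof.
  intros Hl; unfold block_size.
  destruct (Nat.log2_up_spec l ltac:(lia)) as [Hlo _].
  assert (Hk : 0 < Nat.log2_up l) by (apply Nat.log2_up_lt_pow2; simpl; lia).
  destruct (Nat.log2_up l) as [|k]; [lia|]; simpl in Hlo.
  pose proof (Nat.pow_gt_lin_r 2 (S k) ltac:(lia)).
  rewrite Nat.pow_add_r, Nat.pow_succ_r' in *; simpl (2 ^ 2); lia.
Qed.

Lemma two_le_log2 n : 4 <= n -> 2 <= Nat.log2 n.
Proof. intros Hn; apply (Nat.log2_le_pow2 n 2); simpl; lia. Qed.

Lemma level_pos n : 4 <= n -> 1 <= level n.
Proof.
  intros Hn; pose proof (two_le_log2 n Hn).
  apply Nat.log2_up_lt_pow2; simpl; lia.
Qed.

Lemma log2_le_pow2_level n : 4 <= n -> Nat.log2 n <= 2 ^ level n.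
Proof.
  intros Hn; pose proof (two_le_log2 n Hn).
  apply Nat.log2_log2_up_spec; lia.
Qed.

Lemma block_size_pos k : 0 < block_size k.
Proof. unfold block_size; pose proof (Nat.pow_nonzero 2 (k + 2)); lia. Qed.

Lemma height_le_log2 n : height n <= Nat.log2 n.
Proof.
  apply Nat.log2_le_mono, Nat.Div0.div_le_upper_bound.
  pose proof (block_size_pos (level n)); nia.
Qed.

Lemma height_spec n : 64 <= n ->
  let B := block_size (level n) in
  2 ^ height n * B <= n < 2 * 2 ^ height n * B.
Proof.
  intros Hn B.
  assert (HB : 0 < B <= n).
  { split; [apply block_size_pos|].
    assert (6 <= Nat.log2 n) by (apply (Nat.log2_le_pow2 n 6); simpl; lia).
    pose proof (block_size_log2_up_le (Nat.log2 n) ltac:(lia)).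
    pose proof (pow2_ge_10_mul (Nat.log2 n) ltac:(lia)).
    pose proof (Nat.log2_spec n ltac:(lia)); unfold B, level; lia. }
  destruct (Nat.log2_spec (n / B)) as [Hlo Hhi]; [apply Nat.div_str_pos; lia|].
  change (Nat.log2 (n / B)) with (height n) in Hlo, Hhi; rewrite Nat.pow_succ_r' in Hhi.
  pose proof (Nat.Div0.mul_div_le n B); pose proof (Nat.mul_succ_div_gt n B ltac:(lia)).
  split; nia.
Qed.

Lemma size_witness_bounds n : 64 <= n ->
  size (witness n) <= n <= 2 * size (witness n) + 1.
Proof.
  intros Hn; pose proof (height_spec n Hn) as Hh; simpl in Hh.
  pose proof (size_comb (level n) (height n) 0); unfold witness; lia.
Qed.

Lemma lt_20_log2_mul_pow_height n : 64 <= n -> n < 20 * Nat.log2 n * 2 ^ height n.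
Proof.
  intros Hn; pose proof (height_spec n Hn) as [_ Hh].
  pose proof (block_size_log2_up_le (Nat.log2 n) (two_le_log2 n ltac:(lia))).
  fold (level n) in *; nia.
Qed.

Open Scope R_scope.

Lemma ln_le_mono x y : 0 < x -> x <= y -> ln x <= ln y.
Proof.
  intros Hx [Hlt | ->]; [apply Rlt_le, ln_increasing|]; lra.
Qed.

Lemma ln2_pos : 0 < ln 2.
Proof. pose proof ln_lt_2; lra. Qed.

Lemma ln2_lt_1 : ln 2 < 1.
Proof.
  rewrite <- (ln_exp 1); apply ln_increasing; [lra|].
  pose proof (exp_ineq1 1 ltac:(lra)); lra.
Qed.

Lemma ln_pow2 j : ln (INR (2 ^ j)) = INR j * ln 2.
Proof. rewrite pow_INR; apply ln_pow; simpl; lra. Qed.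

Lemma ln_log2_bounds x : (0 < x)%nat ->
  INR (Nat.log2 x) * ln 2 <= ln (INR x) < INR (S (Nat.log2 x)) * ln 2.
Proof.
  intros Hx; destruct (Nat.log2_spec x Hx) as [Hlo Hhi]; rewrite <- !ln_pow2.
  pose proof (Nat.pow_nonzero 2 (Nat.log2 x) ltac:(lia)).
  split.
  - apply ln_le_mono; [apply lt_0_INR; lia | apply le_INR; exact Hlo].
  - apply ln_increasing; [apply lt_0_INR; lia | apply lt_INR; exact Hhi].
Qed.

Lemma log2_le_log2R x : (0 < x)%nat -> INR (Nat.log2 x) <= log2R (INR x).
Proof.
  intros Hx; destruct (ln_log2_bounds x Hx) as [H _]; pose proof ln2_pos.
  unfold log2R; apply Rmult_le_reg_r with (ln 2); auto.
  unfold Rdiv; rewrite Rmult_assoc, Rinv_l; lra.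
Qed.

Lemma ln_ln_le n k : (2 <= n)%nat -> (Nat.log2 n <= 2 ^ k)%nat ->
  ln (ln (INR n)) <= INR (S k) * ln 2.
Proof.
  intros Hn Hk; destruct (ln_log2_bounds n ltac:(lia)) as [Hlo Hhi].
  assert (Hl : 1 <= INR (Nat.log2 n)).
  { apply (le_INR 1); apply (Nat.log2_le_pow2 n 1); simpl; lia. }
  apply le_INR in Hk; rewrite pow_INR in Hk; simpl (INR 2) in Hk.
  rewrite S_INR in Hhi; pose proof ln2_pos; pose proof ln2_lt_1.
  rewrite <- ln_pow2, pow_INR; simpl (INR 2).
  apply ln_le_mono; [nra|]; simpl; nra.
Qed.

Lemma mul_ln_ln_div_ln_le N L K M : 0 < N -> 0 < L -> 0 <= K -> N <= M * L ->
  L * ln 2 <= ln N -> ln (ln N) <= K * ln 2 ->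
  N * ln (ln N) / ln N <= M * K.
Proof.
  intros HN HL HK HNM HlnN HlnlnN; pose proof ln2_pos.
  assert (HM : 0 < M) by nra.
  assert (HlnN0 : 0 < ln N) by nra.
  apply Rmult_le_reg_r with (ln N); auto.
  replace (N * ln (ln N) / ln N * ln N) with (N * ln (ln N)) by (field; lra).
  assert (N * ln (ln N) <= N * (K * ln 2)) by (apply Rmult_le_compat_l; lra).
  assert (N * (K * ln 2) <= M * L * (K * ln 2)) by (apply Rmult_le_compat_r; nra).
  assert (M * K * (L * ln 2) <= M * K * ln N) by (apply Rmult_le_compat_l; nra).
  replace (M * L * (K * ln 2)) with (M * K * (L * ln 2)) in * by ring.
  lra.
Qed.

Lemma depth_witness_le n s : In s (subtrees (witness n)) ->
  INR (depth s) <= 2 * log2R (INR (size s) + 1).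
Proof.
  intros Hs; pose proof (proj1 (Forall_forall _ _) (log_balanced_comb _ _ _) s Hs) as Hb.
  apply le_INR in Hb; rewrite mult_INR in Hb.
  pose proof (log2_le_log2R (size s + 1) ltac:(lia)).
  rewrite plus_INR in *; simpl in *; lra.
Qed.

Lemma dag_size_witness_ge n : (64 <= n)%nat ->
  INR n * ln (ln (INR n)) / ln (INR n) <= 20 * INR (dag_size (witness n)).
Proof.
  intros Hn.
  pose proof (dag_size_comb (level n) (height n) (level_pos n ltac:(lia))
    (Nat.le_trans _ _ _ (height_le_log2 n) (log2_le_pow2_level n ltac:(lia)))) as Hdag.
  apply le_INR in Hdag; rewrite mult_INR, Nat.add_1_r in Hdag.
  pose proof (lt_20_log2_mul_pow_height n Hn) as HN; apply lt_INR in HN.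
  rewrite !mult_INR in HN.
  assert (HL : 1 <= INR (Nat.log2 n)) by (apply (le_INR 1); pose proof (two_le_log2 n); lia).
  eapply Rle_trans.
  - apply (mul_ln_ln_div_ln_le (INR n) (INR (Nat.log2 n)) (INR (S (level n))) (20 * INR (2 ^ height n))).
    + apply lt_0_INR; lia.
    + lra.
    + apply pos_INR.
    + simpl (INR 20) in HN; lra.
    + apply ln_log2_bounds; lia.
    + apply ln_ln_le; [lia | apply log2_le_pow2_level; lia].
  - unfold witness; lra.
Qed.

Theorem mainTheorem8 :
  exists (t : nat -> tree) (C : R),
    0 < C /\
    (exists (c1 c2 : R) (N : nat), 0 < c1 /\ 0 < c2 /\
       forall n : nat, (1 <= n)%nat -> (N <= n)%nat ->
         c1 * INR n <= INR (size (t n)) <= c2 * INR n) /\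
    (forall n : nat, (1 <= n)%nat ->
       forall s : tree, In s (subtrees (t n)) ->
         INR (depth s) <= C * log2R (INR (size s) + 1)) /\
    (exists (d : R) (N : nat), 0 < d /\
       forall n : nat, (1 <= n)%nat -> (N <= n)%nat ->
         d * (INR n * ln (ln (INR n)) / ln (INR n)) <= INR (dag_size (t n))).
Proof.
  exists witness, 2; split; [lra | split; [| split]].
  - exists (1 / 4), 1, 64%nat; split; [lra | split; [lra |]].
    intros n _ Hn; destruct (size_witness_bounds n Hn) as [Hle Hge].
    apply le_INR in Hle, Hge, Hn; rewrite plus_INR, mult_INR in Hge.
    simpl in Hge, Hn; lra.
  - intros n _ s; apply depth_witness_le.
  - exists (1 / 20), 64%nat; split; [lra |].
    intros n _ Hn; pose proof (dag_size_witness_ge n Hn); lra.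
Qed.
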